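(* Let $k\in\mathbb{Z}$, and let $S=\{a_i \bmod d_i : 1\le i\le r\}$ and $S'=\{-a_i+(d_i-1)k \bmod d_i : 1\le i\le r\}$ be exact covering systems. Then the map $\phi_{2,k}:\mathbb{Z}\to\mathbb{Z}$, $\phi_{2,k}(n)=-(n+k)$, is a graph isomorphism from $G_S$ to $G_{S'}$.
   Context: A system of congruences $\{a_i \bmod d_i : 1\le i\le r\}$ with integers $a_i$ and nonzero integers $d_i$ (negative $d_i$ allowed; $n\equiv a \bmod -d$ means $n\equiv a\bmod d$) is an exact covering system if every integer satisfies exactly one of the congruences; congruences are distinguished by their chosen representatives. For such a system $S$, the exact covering system digraph $G_S$ has vertex set $\mathbb{Z}$ and edges $(n,d_in+a_i)$ for all $n\in\mathbb{Z}$, $1\le i\le r$. *)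

From Stdlib Require Import ZArith.
Open Scope Z_scope.

(* A system of r congruences {a_i mod d_i : 0 <= i < r}, given by functions
   a d : nat -> Z (only indices i < r matter). Congruences are distinguished
   by their index (i.e. by their chosen representatives). *)

(* n satisfies n = a mod d  (for negative d this is the same as mod -d). *)
Definition satisfies (n a d : Z) : Prop := (d | n - a)%Z.

Definition exact_covering (r : nat) (a d : nat -> Z) : Prop :=
  (forall i, (i < r)%nat -> d i <> 0) /\
  (forall n : Z, exists! i : nat, (i < r)%nat /\ satisfies n (a i) (d i)).

Definition ecs_edge (r : nat) (a d : nat -> Z) (u v : Z) : Prop :=
  exists i : nat, (i < r)%nat /\ v = d i * u + a i.

Definition digraph_iso (E1 E2 : Z -> Z -> Prop) (f : Z -> Z) : Prop :=
  (forall x y, f x = f y -> x = y) /\ (forall y, exists x, f x = y) /\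
  (forall u v, E1 u v <-> E2 (f u) (f v)).

From Stdlib Require Import ZArith.
Open Scope Z_scope.

(* The map [n |-> -(n + k)] is an involution of Z, and it conjugates each
   affine map [n |-> d n + a] into [n |-> d n + (-a + (d - 1) k)].  Hence it
   carries the edges of congruence i of S exactly onto those of congruence i
   of S'. *)

Definition reflect_shift (k n : Z) : Z := - (n + k).

Lemma reflect_shiftK (k n : Z) : reflect_shift k (reflect_shift k n) = n.
Proof. unfold reflect_shift; ring. Qed.

Lemma reflect_shift_inj (k x y : Z) :
  reflect_shift k x = reflect_shift k y -> x = y.
Proof. intros Hxy; rewrite <- (reflect_shiftK k x), Hxy; apply reflect_shiftK. Qed.

Lemma reflect_shift_affine (k a d u : Z) :
  reflect_shift k (d * u + a) = d * reflect_shift k u + (- a + (d - 1) * k).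
Proof. unfold reflect_shift; ring. Qed.

Lemma ecs_edge_reflect_shift (k : Z) (r : nat) (a d : nat -> Z) (u v : Z) :
  ecs_edge r a d u v <->
  ecs_edge r (fun i => - a i + (d i - 1) * k) d
           (reflect_shift k u) (reflect_shift k v).
Proof.
  split; intros [i [Hi Hv]]; exists i; split; [assumption | | assumption |].
  - rewrite Hv; apply reflect_shift_affine.
  - apply (reflect_shift_inj k); rewrite Hv; symmetry; apply reflect_shift_affine.
Qed.

Theorem mainTheorem8 (k : Z) (r : nat) (a d : nat -> Z) :
  exact_covering r a d ->
  exact_covering r (fun i => - a i + (d i - 1) * k) d ->
  digraph_iso (ecs_edge r a d)
              (ecs_edge r (fun i => - a i + (d i - 1) * k) d)
              (fun n => - (n + k)).
Proof.
  intros _ _.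
  split; [| split].
  - exact (reflect_shift_inj k).
  - intros y; exists (reflect_shift k y); apply reflect_shiftK.
  - exact (ecs_edge_reflect_shift k r a d).
Qed.
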